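(* Let $n,m\ge1$, $V_{th}>0$, $\mathbf{W}\in\mathbb{R}^{n\times n}$, $\mathbf{F}\in\mathbb{R}^{n\times m}$, $\mathbf{b}\in\mathbb{R}^n$, and let $(\mathbf{x}[t])_{t\ge0}$ be inputs in $\mathbb{R}^m$. Consider the discrete feedback spiking neural network with the integrate-and-fire model: $\mathbf{u}[0]=\mathbf{0}$, $\mathbf{s}[0]=\mathbf{0}$, and for $t\ge0$ $$\mathbf{u}[t+\tfrac12]=\mathbf{u}[t]+\mathbf{W}\mathbf{s}[t]+\mathbf{F}\mathbf{x}[t]+\mathbf{b},\quad \mathbf{s}[t+1]=H(\mathbf{u}[t+\tfrac12]-V_{th}),\quad \mathbf{u}[t+1]=\mathbf{u}[t+\tfrac12]-V_{th}\mathbf{s}[t+1],$$ with $H$ the elementwise Heaviside step function. Define the average firing rates $\mathbf{a}[t]=\frac1t\sum_{\tau=1}^t\mathbf{s}[\tau]$ and the average inputs $\overline{\mathbf{x}}[t]=\frac{1}{t+1}\sum_{\tau=0}^t\mathbf{x}[\tau]$. Let $\mathbf{u}^+[t]\in\mathbb{R}^n$ denote the part of the membrane potential for which $$\mathbf{a}[t+1]=\sigma\!\left(\frac1{V_{th}}\left(\frac{t}{t+1}\mathbf{W}\mathbf{a}[t]+\mathbf{F}\overline{\mathbf{x}}[t]+\mathbf{b}-\frac{\mathbf{u}^+[t+1]}{t+1}\right)\right)$$ holds for all $t$. Suppose $\overline{\mathbf{x}}[t]\to\mathbf{x}^*$, and there exist constants $c$ and $\gamma<1$ such that $|\mathbf{u}^+_i[t]|\le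 c$ for all $i,t$ and $\|\mathbf{W}\|_2\le\gamma V_{th}$. Then $\mathbf{a}[t]$ converges to a point $\mathbf{a}^*$ satisfying $$\mathbf{a}^*=\sigma\!\left(\frac1{V_{th}}\left(\mathbf{W}\mathbf{a}^*+\mathbf{F}\mathbf{x}^*+\mathbf{b}\right)\right).$$
   Context: $\sigma$ is applied elementwise with $\sigma(x)=1$ for $x>1$, $\sigma(x)=x$ for $0\le x\le1$, $\sigma(x)=0$ for $x<0$. $\|\cdot\|_2$ is the spectral norm. In the paper $\mathbf{u}_i[t]=\mathbf{u}^-_i[t]+\mathbf{u}^+_i[t]$ where $\frac1t\mathbf{u}^-_i[t]=\min(\max(v_i[t]-V_{th},0),v_i[t])$ (with $v[t]$ the argument $\frac{t-1}{t}\mathbf{W}\mathbf{a}[t-1]+\mathbf{F}\overline{\mathbf{x}}[t-1]+\mathbf{b}$) collects the negative and excess positive terms, and $\mathbf{u}^+[t]$ is the remainder; with this decomposition the displayed relation holds. *)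

From HB Require Import structures.
From mathcomp Require Import all_boot all_order all_algebra.
From mathcomp Require Import all_classical all_reals all_analysis.
Set Implicit Arguments. Unset Strict Implicit. Unset Printing Implicit Defensive.
Import Order.TTheory GRing.Theory Num.Theory.
Import numFieldNormedType.Exports.
Local Open Scope classical_set_scope.
Local Open Scope ring_scope.

Section SNN.
Context {R : realType}.

Definition heaviside (y : R) : R := if 0 <= y then 1 else 0.

Definition sigma (y : R) : R := if y < 0 then 0 else if 1 < y then 1 else y.

Definition vnorm2 {k : nat} (v : 'cV[R]_k) : R := Num.sqrt (\sum_i v i 0 ^+ 2).

Definition spectral_norm {p q : nat} (A : 'M[R]_(p, q)) : R :=
  sup [set vnorm2 (A *m v) | v in [set v : 'cV[R]_q | vnorm2 v = 1]].

Fixpoint snn_state {n m : nat} (W : 'M[R]_n) (F : 'M[R]_(n, m)) (b : 'cV[R]_n)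
  (Vth : R) (x : nat -> 'cV[R]_m) (t : nat) : 'cV[R]_n * 'cV[R]_n :=
  match t with
  | 0%N => (0, 0)
  | t'.+1 =>
      let us := snn_state W F b Vth x t' in
      let uh := us.1 + W *m us.2 + F *m x t' + b in
      let s' := map_mx (fun y => heaviside (y - Vth)) uh in
      (uh - Vth *: s', s')
  end.

Definition spikes {n m : nat} W F b Vth x (t : nat) : 'cV[R]_n :=
  (@snn_state n m W F b Vth x t).2.

(* a[t] = 1/t sum_{tau=1}^t s[tau]  (a[0] = 0) *)
Definition rate {n m : nat} W F b Vth x (t : nat) : 'cV[R]_n :=
  (t%:R)^-1 *: \sum_(1 <= tau < t.+1) @spikes n m W F b Vth x tau.

Definition avg_input {m : nat} (x : nat -> 'cV[R]_m) (t : nat) : 'cV[R]_m :=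
  (t.+1%:R)^-1 *: \sum_(0 <= tau < t.+1) x tau.

End SNN.

(* The map f y = sigma ((W y + F x* + b) / Vth) is a gamma-contraction for
   the Euclidean norm, since sigma is 1-Lipschitz and ||W||_2 <= gamma Vth.
   The rate equation says a[t+1] = f (a[t]) + e_t, and e_t -> 0: the rates
   lie in [0,1]^n and u+ is bounded, so (W a[t] + u+[t+1]) / (t+1) vanishes,
   while F xbar[t] -> F x*.  Iterating a contraction up to vanishing errors
   gives a Cauchy sequence, and its limit is a fixed point of f. *)

From HB Require Import structures.
From mathcomp Require Import all_boot all_order all_algebra.
From mathcomp Require Import all_classical all_reals all_analysis.
From mathcomp Require Import ring lra.
Import Order.TTheory GRing.Theory Num.Theory.
Import numFieldNormedType.Exports.
Local Open Scope classical_set_scope.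
Local Open Scope ring_scope.
Set Implicit Arguments. Unset Strict Implicit. Unset Printing Implicit Defensive.

Section PerturbedContraction.
Variables (R : realType) (V : zmodType) (N : V -> R).
Hypotheses (N_ge0 : forall v, 0 <= N v)
  (N_triangle : forall u v, N (u + v) <= N u + N v)
  (N_opp : forall v, N (- v) = N v).
Variables (f : V -> V) (gamma : R).
Hypotheses (gamma_ge0 : 0 <= gamma)
  (f_lipschitz : forall y z, N (f y - f z) <= gamma * N (y - z)).
Variable a : nat -> V.
Hypothesis step_err_cvg0 : (fun t => N (a t.+1 - f (a t))) @ \oo --> 0.

Lemma N_triangle3 u v w : N (u + v + w) <= N u + N v + N w.
Proof. by apply: le_trans (N_triangle _ _) _; rewrite lerD2r N_triangle. Qed.

Lemma perturbed_step t s :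
  N (a t.+1 - a s.+1) <=
  N (a t.+1 - f (a t)) + gamma * N (a t - a s) + N (a s.+1 - f (a s)).
Proof.
have -> : a t.+1 - a s.+1 =
    (a t.+1 - f (a t)) + (f (a t) - f (a s)) + - (a s.+1 - f (a s)).
  by rewrite opprB !addrA !subrK.
by apply: le_trans (N_triangle3 _ _ _) _; rewrite N_opp lerD2r lerD2l.
Qed.

Lemma perturbed_iterate eta T B :
  (forall t, (T <= t)%N -> N (a t.+1 - f (a t)) <= eta) ->
  (forall t s, N (a t - a s) <= B) -> gamma < 1 ->
  forall j t s, (T <= t)%N -> (T <= s)%N ->
  N (a (t + j) - a (s + j)) <= gamma ^+ j * B + 2 * eta / (1 - gamma).
Proof.
move=> err_le a_bounded gamma_lt1.
have eta_ge0 : 0 <= eta.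
  by apply: le_trans (err_le T (leqnn T)); exact: N_ge0.
have tail_ge0 : 0 <= 2 * eta / (1 - gamma).
  by rewrite divr_ge0 ?mulr_ge0 // subr_ge0 ltW.
have tail_fix : 2 * eta + gamma * (2 * eta / (1 - gamma)) = 2 * eta / (1 - gamma).
  by field; rewrite subr_eq0 gt_eqF.
elim=> [|j IHj] t s Tt Ts.
  by rewrite !addn0 expr0 mul1r; apply: le_trans (a_bounded t s) _; rewrite lerDl.
rewrite !addnS; apply: le_trans (perturbed_step _ _) _.
have err_t := err_le _ (leq_trans Tt (leq_addr j t)).
have err_s := err_le _ (leq_trans Ts (leq_addr j s)).
have IH := ler_wpM2l gamma_ge0 (IHj t s Tt Ts).
rewrite exprSr -mulrA (mulrC gamma) mulrA; nra.
Qed.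

Lemma perturbed_contraction_cauchy B : gamma < 1 ->
  (forall t s, N (a t - a s) <= B) ->
  forall eps, 0 < eps -> exists T, forall t s, (T <= t)%N -> (T <= s)%N ->
  N (a t - a s) <= eps.
Proof.
move=> gamma_lt1 a_bounded eps eps_gt0.
have gamma1_gt0 : 0 < 1 - gamma by rewrite subr_gt0.
pose eta := eps * (1 - gamma) / 4.
have eta_gt0 : 0 < eta by rewrite divr_gt0 ?mulr_gt0.
have [T0 _ err_le] := cvgr0_norm_le _ step_err_cvg0 _ eta_gt0.
have geom_cvg0 : (fun j => gamma ^+ j * B) @ \oo --> 0.
  by rewrite -(mul0r B); apply: cvgMl; apply: cvg_expr; rewrite ger0_norm.
have [k _ geom_le] := cvgr0_norm_le _ geom_cvg0 _ (divr_gt0 eps_gt0 (ltr0Sn R 1)).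
have {}err_le t : (T0 <= t)%N -> N (a t.+1 - f (a t)) <= eta.
  by move=> /err_le; rewrite ger0_norm.
exists (T0 + k)%N => t s Tt Ts.
have shift_le u : (T0 + k <= u)%N -> (k <= u)%N /\ (T0 <= u - k)%N.
  by move=> Tu; have ku := leq_trans (leq_addl T0 k) Tu; rewrite leq_subRL // addnC.
have [kt T0t] := shift_le t Tt; have [ks T0s] := shift_le s Ts.
rewrite -(subnK kt) -(subnK ks).
apply: le_trans (perturbed_iterate err_le a_bounded gamma_lt1 k T0t T0s) _.
have /ler_normlW geom_k := geom_le k (leqnn k).
have -> : 2 * eta / (1 - gamma) = eps / 2.
  by rewrite /eta; field; rewrite gt_eqF.
lra.
Qed.

Lemma perturbed_contraction_limit_fixed l :
  (fun t => N (a t - l)) @ \oo --> 0 -> N (l - f l) = 0.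
Proof.
move=> a_cvg_l.
have bound t : N (l - f l) <=
    N (a t.+1 - l) + N (a t.+1 - f (a t)) + gamma * N (a t - l).
  have -> : l - f l = - (a t.+1 - l) + (a t.+1 - f (a t)) + (f (a t) - f l).
    by rewrite opprB !addrA !subrK.
  by apply: le_trans (N_triangle3 _ _ _) _; rewrite N_opp lerD2l.
have bound_cvg0 : (fun t => N (a t.+1 - l) + N (a t.+1 - f (a t))
                            + gamma * N (a t - l)) @ \oo --> 0 + 0 + gamma * 0.
  apply: cvgD; [apply: cvgD => //|exact: cvgMr].
  by rewrite (cvg_shiftS (fun t => N (a t - l))).
rewrite mulr0 !addr0 in bound_cvg0.
apply/eqP; rewrite eq_le N_ge0 andbT.
rewrite -(cvg_lim (@Rhausdorff R) bound_cvg0).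
apply: limr_ge; first exact: cvgP bound_cvg0.
exact: nearW.
Qed.

End PerturbedContraction.

Lemma cauchy_schwarz_sum (R : realDomainType) (I : finType) (a b : I -> R) :
  (\sum_i a i * b i) ^+ 2 <= (\sum_i a i ^+ 2) * (\sum_i b i ^+ 2).
Proof.
have lagrange : \sum_i \sum_j (a i * b j - a j * b i) ^+ 2 =
    ((\sum_i a i ^+ 2) * (\sum_j b j ^+ 2) - (\sum_i a i * b i) ^+ 2) *+ 2.
  have expand i j : (a i * b j - a j * b i) ^+ 2 =
      a i ^+ 2 * b j ^+ 2 + a j ^+ 2 * b i ^+ 2 - (a i * b i) * (a j * b j) *+ 2.
    by ring.
  under eq_bigr do under eq_bigr do rewrite expand.
  under eq_bigr do rewrite sumrB big_split /= sumrMnl.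
  rewrite sumrB big_split /= sumrMnl.
  rewrite (exchange_big _ _ _ _ _ (fun i j => a j ^+ 2 * b i ^+ 2)) /=.
  by rewrite expr2 !big_distrlr /= mulrnBl mulr2n.
rewrite -subr_ge0 -(pmulrn_lge0 _ (ltn0Sn 1)) -lagrange.
by apply: sumr_ge0 => i _; apply: sumr_ge0 => j _; exact: sqr_ge0.
Qed.

Section EuclideanNorm.
Variable R : realType.

Lemma vnorm2_ge0 k (v : 'cV[R]_k) : 0 <= vnorm2 v.
Proof. exact: sqrtr_ge0. Qed.

Lemma vnorm2_sqr k (v : 'cV[R]_k) : vnorm2 v ^+ 2 = \sum_i v i 0 ^+ 2.
Proof. by rewrite sqr_sqrtr // sumr_ge0 // => i _; exact: sqr_ge0. Qed.

Lemma vnorm2_le k (v : 'cV[R]_k) r :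
  0 <= r -> (vnorm2 v <= r) = (\sum_i v i 0 ^+ 2 <= r ^+ 2).
Proof. by move=> r_ge0; rewrite -vnorm2_sqr ler_pXn2r // nnegrE vnorm2_ge0. Qed.

Lemma vnorm2Z k c (v : 'cV[R]_k) : vnorm2 (c *: v) = `|c| * vnorm2 v.
Proof.
rewrite /vnorm2 -sqrtr_sqr -sqrtrM ?sqr_ge0 // mulr_sumr.
by congr Num.sqrt; apply: eq_bigr => i _; rewrite mxE exprMn.
Qed.

Lemma vnorm2N k (v : 'cV[R]_k) : vnorm2 (- v) = vnorm2 v.
Proof. by rewrite -scaleN1r vnorm2Z normrN normr1 mul1r. Qed.

Lemma ler_vnorm2D k (u v : 'cV[R]_k) : vnorm2 (u + v) <= vnorm2 u + vnorm2 v.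
Proof.
rewrite vnorm2_le ?addr_ge0 ?vnorm2_ge0 //.
have cs := cauchy_schwarz_sum (fun i => u i 0) (fun i => v i 0).
rewrite -!vnorm2_sqr -exprMn in cs.
have uv_le : \sum_i u i 0 * v i 0 <= vnorm2 u * vnorm2 v.
  have := mulr_ge0 (vnorm2_ge0 u) (vnorm2_ge0 v); nra.
have -> : \sum_i (u + v) i 0 ^+ 2 =
    vnorm2 u ^+ 2 + (\sum_i u i 0 * v i 0) *+ 2 + vnorm2 v ^+ 2.
  rewrite !vnorm2_sqr -sumrMnl -!big_split /=.
  by apply: eq_bigr => i _; rewrite !mxE sqrrD.
rewrite sqrrD; lra.
Qed.

(* [`|v|] is the max-entry norm, which carries the topology of ['cV_k]. *)
Lemma mx_norm_le_vnorm2 k (v : 'cV[R]_k) : `|v| <= vnorm2 v.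
Proof.
rewrite [leLHS]/Num.Def.normr /= mx_normrE.
apply: bigmax_le => [|[i j] _]; first exact: vnorm2_ge0.
rewrite /= (ord1 j) -sqrtr_sqr /vnorm2 ler_sqrt; last first.
  by rewrite sumr_ge0 // => *; exact: sqr_ge0.
by rewrite (bigD1 i) //= lerDl sumr_ge0 // => *; exact: sqr_ge0.
Qed.

Lemma vnorm2_le_mx_norm k (v : 'cV[R]_k) : vnorm2 v <= Num.sqrt k%:R * `|v|.
Proof.
rewrite vnorm2_le ?mulr_ge0 ?sqrtr_ge0 // exprMn sqr_sqrtr //.
have -> : k%:R * `|v| ^+ 2 = \sum_(i < k) `|v| ^+ 2.
  by rewrite sumr_const card_ord mulr_natl.
apply: ler_sum => i _.
rewrite -real_normK ?num_real // lerXn2r ?nnegrE //.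
rewrite [leRHS]/Num.Def.normr /= mx_normrE.
exact: (le_bigmax _ _ (i, 0)).
Qed.

Lemma vnorm2_le_entries k (v : 'cV[R]_k) d :
  0 <= d -> (forall i, `|v i 0| <= d) -> vnorm2 v <= Num.sqrt k%:R * d.
Proof.
move=> d_ge0 v_le; apply: le_trans (vnorm2_le_mx_norm v) _.
rewrite ler_wpM2l ?sqrtr_ge0 // [leLHS]/Num.Def.normr /= mx_normrE.
by apply: bigmax_le => // -[i j] _; rewrite /= (ord1 j).
Qed.

Lemma vnorm2_eq0 k (v : 'cV[R]_k) : vnorm2 v = 0 -> v = 0.
Proof.
by move=> v0; apply/normr0_eq0/eqP; rewrite eq_le normr_ge0 -v0 mx_norm_le_vnorm2.
Qed.

Definition frobenius_norm p q (A : 'M[R]_(p, q)) :=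
  Num.sqrt (\sum_i \sum_j A i j ^+ 2).

Lemma vnorm2_mulmx_le_frobenius p q (A : 'M[R]_(p, q)) v :
  vnorm2 (A *m v) <= frobenius_norm A * vnorm2 v.
Proof.
rewrite vnorm2_le ?mulr_ge0 ?vnorm2_ge0 ?sqrtr_ge0 //.
rewrite exprMn vnorm2_sqr sqr_sqrtr; last first.
  by apply: sumr_ge0 => i _; apply: sumr_ge0 => j _; exact: sqr_ge0.
rewrite mulr_suml; apply: ler_sum => i _; rewrite mxE.
exact: cauchy_schwarz_sum (fun j => A i j) (fun j => v j 0).
Qed.

(* The Frobenius bound makes the set in [spectral_norm] bounded, without which
   its [sup] would be a junk value. *)
Lemma vnorm2_mulmx_unit_le p q (A : 'M[R]_(p, q)) v :
  vnorm2 v = 1 -> vnorm2 (A *m v) <= spectral_norm A.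
Proof.
move=> v_unit; apply: ub_le_sup; last by exists v.
exists (frobenius_norm A) => _ [u /= u_unit <-].
by rewrite -[leRHS]mulr1 -u_unit vnorm2_mulmx_le_frobenius.
Qed.

Lemma spectral_norm_ge0 p q (A : 'M[R]_(p, q)) : (0 < q)%N -> 0 <= spectral_norm A.
Proof.
move=> q_gt0; pose e : 'cV[R]_q := \col_i (i == Ordinal q_gt0)%:R.
have e_unit : vnorm2 e = 1.
  rewrite /vnorm2 (bigD1 (Ordinal q_gt0)) //= big1 => [|i /negbTE ni].
    by rewrite mxE eqxx expr1n addr0 sqrtr1.
  by rewrite mxE ni expr0n.
exact: le_trans (vnorm2_ge0 _) (vnorm2_mulmx_unit_le A e_unit).
Qed.

Lemma vnorm2_mulmx_le p q (A : 'M[R]_(p, q)) v :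
  vnorm2 (A *m v) <= spectral_norm A * vnorm2 v.
Proof.
have [v0|v_neq0] := eqVneq (vnorm2 v) 0.
  rewrite v0 mulr0 (vnorm2_eq0 v0) mulmx0 /vnorm2 big1 ?sqrtr0 // => i _.
  by rewrite mxE expr0n.
have v_gt0 : 0 < vnorm2 v by rewrite lt_def v_neq0 vnorm2_ge0.
rewrite -ler_pdivrMr // mulrC -[(vnorm2 v)^-1]ger0_norm ?invr_ge0 ?vnorm2_ge0 //.
rewrite -vnorm2Z scalemxAr; apply: vnorm2_mulmx_unit_le.
by rewrite vnorm2Z ger0_norm ?invr_ge0 ?vnorm2_ge0 // mulVf.
Qed.

Lemma cvg_vnorm2 k (g : nat -> 'cV[R]_k) (l : 'cV[R]_k) :
  g @ \oo --> l -> (fun t => vnorm2 (g t - l)) @ \oo --> 0.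
Proof.
move=> g_cvg; have : (fun t => Num.sqrt k%:R * `|g t - l|) @ \oo --> 0.
  rewrite -(mulr0 (Num.sqrt k%:R)); apply: cvgMr; apply/norm_cvg0P.
  by rewrite -(subrr l); apply: cvgB => //; exact: cvg_cst.
apply: squeeze_cvgr; last exact: cvg_cst.
by apply: nearW => t; rewrite vnorm2_ge0 vnorm2_le_mx_norm.
Qed.

Lemma vnorm2_cauchy_cvg k (g : nat -> 'cV[R]_k) :
  (forall eps, 0 < eps -> exists T, forall t s, (T <= t)%N -> (T <= s)%N ->
     vnorm2 (g t - g s) <= eps) ->
  cvg (g @ \oo).
Proof.
move=> g_cauchy; apply/cauchy_cvgP/cauchy_exP => eps eps_gt0.
have [T g_close] := g_cauchy _ (divr_gt0 eps_gt0 (ltr0Sn R 1)).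
exists (g T); exists T => // t Tt; rewrite -ball_normE /ball_ /=.
apply: le_lt_trans (mx_norm_le_vnorm2 _) _.
by apply: le_lt_trans (g_close _ _ (leqnn T) Tt) _; lra.
Qed.

End EuclideanNorm.

Section RateEquation.
Variable R : realType.

Lemma sigma_lipschitz (p q : R) : `|sigma p - sigma q| <= `|p - q|.
Proof.
wlog le_qp : p q / q <= p.
  move=> wlog_le; case/orP: (le_total q p); first exact: wlog_le.
  by rewrite distrC (distrC p); exact: wlog_le.
suff /andP[sigma_ge sigma_le] : 0 <= sigma p - sigma q <= p - q.
  by rewrite (ger0_norm sigma_ge) ger0_norm ?subr_ge0.
rewrite /sigma; case: (ltrP p 0) => ?; case: (ltrP 1 p) => ?.
all: case: (ltrP q 0) => ?; case: (ltrP 1 q) => ?.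
all: apply/andP; split; lra.
Qed.

Lemma vnorm2_map_sigma k (p q : 'cV[R]_k) :
  vnorm2 (map_mx sigma p - map_mx sigma q) <= vnorm2 (p - q).
Proof.
rewrite vnorm2_le ?vnorm2_ge0 // vnorm2_sqr; apply: ler_sum => i _.
rewrite !mxE -[leLHS]real_normK ?num_real // -[leRHS]real_normK ?num_real //.
rewrite lerXn2r ?nnegrE //.
exact: sigma_lipschitz.
Qed.

Definition rate_map n m (W : 'M[R]_n) (F : 'M[R]_(n, m)) (b : 'cV[R]_n)
    (Vth : R) (xstar : 'cV[R]_m) (y : 'cV[R]_n) : 'cV[R]_n :=
  map_mx sigma (Vth^-1 *: (W *m y + F *m xstar + b)).

Lemma rate_map_lipschitz n m (W : 'M[R]_n) (F : 'M[R]_(n, m)) b Vth xstar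
    (y z : 'cV[R]_n) : 0 < Vth ->
  vnorm2 (rate_map W F b Vth xstar y - rate_map W F b Vth xstar z) <=
  spectral_norm W / Vth * vnorm2 (y - z).
Proof.
move=> Vth_gt0; apply: le_trans (vnorm2_map_sigma _ _) _.
rewrite -scalerBr -[W *m y + _ + b]addrA -[W *m z + _ + b]addrA.
rewrite opprD addrACA subrr addr0 -mulmxBr vnorm2Z.
rewrite ger0_norm ?invr_ge0 ?(ltW Vth_gt0) //.
rewrite (mulrAC (spectral_norm W)) (mulrC _ Vth^-1).
rewrite ler_wpM2l ?invr_ge0 ?(ltW Vth_gt0) //.
exact: vnorm2_mulmx_le.
Qed.

Lemma spikes_in01 n m W F b Vth x t (i : 'I_n) :
  0 <= @spikes R n m W F b Vth x t i 0 <= 1.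
Proof.
case: t => [|t]; first by rewrite /spikes /= mxE lexx ler01.
by rewrite /spikes /= mxE /heaviside; case: ifP; rewrite lexx ler01.
Qed.

Lemma rate_in01 n m W F b Vth x t (i : 'I_n) :
  0 <= @rate R n m W F b Vth x t i 0 <= 1.
Proof.
case: t => [|t]; first by rewrite /rate invr0 scale0r mxE lexx ler01.
rewrite /rate mxE summxE.
set S := \sum_(1 <= tau < t.+2) _.
have S_ge0 : 0 <= S.
  by apply: sumr_ge0 => tau _; case/andP: (spikes_in01 W F b Vth x tau i).
have S_le : S <= t.+1%:R.
  have -> : t.+1%:R = \sum_(1 <= tau < t.+2) (1 : R).
    by rewrite sumr_const_nat subSS subn0.
  by apply: ler_sum => tau _; case/andP: (spikes_in01 W F b Vth x tau i).
by rewrite mulr_ge0 ?invr_ge0 //= ler_pdivrMl ?mulr1.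
Qed.

End RateEquation.

Section RateDynamics.
Variables (R : realType) (n m : nat) (W : 'M[R]_n) (F : 'M[R]_(n, m))
  (b : 'cV[R]_n) (Vth : R) (x : nat -> 'cV[R]_m) (uplus : nat -> 'cV[R]_n)
  (xstar : 'cV[R]_m) (c : R).
Hypotheses (n_gt0 : (0 < n)%N) (Vth_gt0 : 0 < Vth) (c_ge0 : 0 <= c).
Hypothesis rate_rec : forall t : nat,
  rate W F b Vth x t.+1 =
  map_mx sigma (Vth^-1 *: ((t%:R / t.+1%:R) *: (W *m rate W F b Vth x t)
                           + F *m avg_input x t + b
                           - (t.+1%:R)^-1 *: uplus t.+1)).
Hypothesis uplus_bounded : forall (i : 'I_n) (t : nat), `|uplus t i 0| <= c.

Local Notation a := (rate W F b Vth x).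
Local Notation f := (rate_map W F b Vth xstar).

Lemma vnorm2_rate_le t : vnorm2 (a t) <= Num.sqrt n%:R.
Proof.
rewrite -[leRHS]mulr1; apply: vnorm2_le_entries => // i.
by have /andP[? ?] := rate_in01 W F b Vth x t i; rewrite ger0_norm.
Qed.

Lemma vnorm2_rate_sub_le t s : vnorm2 (a t - a s) <= Num.sqrt n%:R.
Proof.
rewrite -[leRHS]mulr1; apply: vnorm2_le_entries => // i.
have := rate_in01 W F b Vth x s i; have := rate_in01 W F b Vth x t i.
move: (a t) (a s) => u v /andP[? ?] /andP[? ?].
by rewrite !mxE ler_norml; apply/andP; split; lra.
Qed.

Lemma rate_step_error_le t :
  vnorm2 (a t.+1 - f (a t)) <=
  Vth^-1 * ((t.+1%:R)^-1 * (Num.sqrt n%:R * (spectral_norm W + c))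
            + frobenius_norm F * vnorm2 (avg_input x t - xstar)).
Proof.
set d : R := (t.+1%:R)^-1.
have d_ge0 : 0 <= d by rewrite invr_ge0.
have t_frac : t%:R / t.+1%:R = 1 - d.
  by rewrite /d -[t.+1]addn1 natrD; field; rewrite natr1 pnatr_eq0.
have Vth_inv_ge0 : 0 <= Vth^-1 by rewrite invr_ge0 ltW.
rewrite rate_rec; apply: le_trans (vnorm2_map_sigma _ _) _.
rewrite -scalerBr vnorm2Z ger0_norm // ler_wpM2l // t_frac.
have -> : (1 - d) *: (W *m a t) + F *m avg_input x t + b - d *: uplus t.+1
          - (W *m a t + F *m xstar + b)
        = F *m (avg_input x t - xstar) - d *: (W *m a t + uplus t.+1).
  rewrite mulmxBr; move: (W *m a t) (F *m avg_input x t) (F *m xstar) => A X Y.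
  by apply/matrixP => i j; rewrite !mxE; ring.
rewrite addrC; apply: le_trans (ler_vnorm2D _ _) _.
rewrite vnorm2N vnorm2Z ger0_norm // lerD ?vnorm2_mulmx_le_frobenius //.
rewrite ler_wpM2l // mulrDr; apply: le_trans (ler_vnorm2D _ _) _.
apply: lerD; last exact: vnorm2_le_entries.
rewrite mulrC; apply: le_trans (vnorm2_mulmx_le _ _) _.
by rewrite ler_wpM2l ?spectral_norm_ge0 ?vnorm2_rate_le.
Qed.

Hypothesis avg_input_cvg : avg_input x @ \oo --> xstar.

Lemma rate_step_error_cvg0 : (fun t => vnorm2 (a t.+1 - f (a t))) @ \oo --> 0.
Proof.
set K := Num.sqrt n%:R * (spectral_norm W + c).
apply: (@squeeze_cvgr _ _ _ _ (cst 0)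
  (fun t => Vth^-1 * ((t.+1%:R)^-1 * K
            + frobenius_norm F * vnorm2 (avg_input x t - xstar)))).
- by apply: nearW => t; rewrite vnorm2_ge0 rate_step_error_le.
- exact: cvg_cst.
rewrite -(mulr0 Vth^-1) -(addr0 0); apply: cvgMr; apply: cvgD.
  by rewrite -(mul0r K); apply: cvgMl; exact: cvg_harmonic.
by rewrite -(mulr0 (frobenius_norm F)); apply: cvgMr; exact: cvg_vnorm2.
Qed.

End RateDynamics.

Theorem theorem2 (R : realType) (n m : nat) (Vth : R) (W : 'M[R]_n)
  (F : 'M[R]_(n, m)) (b : 'cV[R]_n) (x : nat -> 'cV[R]_m)
  (uplus : nat -> 'cV[R]_n) (xstar : 'cV[R]_m) (c gamma : R) :
  (0 < n)%N -> (0 < m)%N -> 0 < Vth ->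
  (forall t : nat,
     rate W F b Vth x t.+1 =
     map_mx sigma (Vth^-1 *: ((t%:R / t.+1%:R) *: (W *m rate W F b Vth x t)
                              + F *m avg_input x t + b
                              - (t.+1%:R)^-1 *: uplus t.+1))) ->
  avg_input x @ \oo --> xstar ->
  gamma < 1 ->
  (forall (i : 'I_n) (t : nat), `|uplus t i 0| <= c) ->
  spectral_norm W <= gamma * Vth ->
  exists astar : 'cV[R]_n,
    rate W F b Vth x @ \oo --> astar /\
    astar = map_mx sigma (Vth^-1 *: (W *m astar + F *m xstar + b)).
Proof.
move=> n_gt0 _ Vth_gt0 rate_rec avg_cvg gamma_lt1 uplus_bounded W_le.
have gamma_ge0 : 0 <= gamma.
  by rewrite -(pmulr_lge0 _ Vth_gt0) (le_trans (spectral_norm_ge0 W n_gt0)).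
have c_ge0 : 0 <= c.
  exact: le_trans (normr_ge0 _) (uplus_bounded (Ordinal n_gt0) 0%N).
set f := rate_map W F b Vth xstar.
have contraction y z : vnorm2 (f y - f z) <= gamma * vnorm2 (y - z).
  apply: le_trans (rate_map_lipschitz W F b xstar y z Vth_gt0) _.
  by rewrite ler_wpM2r ?vnorm2_ge0 // ler_pdivrMr.
have err_cvg0 :=
  rate_step_error_cvg0 n_gt0 Vth_gt0 c_ge0 rate_rec uplus_bounded avg_cvg.
have /cvg_ex[astar rate_cvg] : cvg (rate W F b Vth x @ \oo).
  apply: vnorm2_cauchy_cvg.
  exact: (perturbed_contraction_cauchy (@vnorm2_ge0 R n) (@ler_vnorm2D R n)
           (@vnorm2N R n) gamma_ge0 contraction err_cvg0 gamma_lt1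
           (vnorm2_rate_sub_le W F b Vth x)).
exists astar; split => //.
have := perturbed_contraction_limit_fixed (@vnorm2_ge0 R n) (@ler_vnorm2D R n)
  (@vnorm2N R n) contraction err_cvg0 (cvg_vnorm2 rate_cvg).
by move/vnorm2_eq0/eqP; rewrite subr_eq0 => /eqP.
Qed.
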